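(* Let $\mathcal{A}$ be a complex Banach algebra with identity, let $\lambda$ be a nonzero complex number, and let $a, b \in \mathcal{A}^d$. If $$ab = \lambda\, a^\pi b a b^\pi,$$ then $a + b \in \mathcal{A}^d$ and $$\begin{aligned}(a + b)^d ={}& b^\pi a^d + b^d a^\pi + \sum_{n=0}^{\infty} (b^d)^{n+2} a (a + b)^n a^\pi + b^\pi \sum_{n=0}^{\infty} (a + b)^n b (a^d)^{n+2} \\ &- \sum_{n=0}^{\infty} \sum_{k=0}^{\infty} (b^d)^{k+1} a (a + b)^{n+k} b (a^d)^{n+2} - \sum_{n=0}^{\infty} (b^d)^{n+2} a (a + b)^n b a^d ,\end{aligned}$$ where all series converge.
   Context: For $x\in\mathcal{A}$, $\mathrm{comm}(x)=\{y\in\mathcal{A}: xy=yx\}$. $\mathcal{A}^{qnil}$ is the set of quasinilpotent elements of $\mathcal{A}$, i.e. those $x$ with $\lim_{n\to\infty}\|x^n\|^{1/n}=0$. An element $x\in\mathcal{A}$ has a generalized Drazin (g-Drazin) inverse if there is $y \in \mathrm{comm}(x)$ with $y = yxy$ and $x - x^2y \in \mathcal{A}^{qnil}$; such $y$ is unique and denoted $x^d$. $\mathcal{A}^d$ denotes the set of g-Drazin invertible elements. The spectral idempotent of $x\in\mathcal{A}^d$ is $x^\pi = 1 - xx^d$. *)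

From Stdlib Require Import Reals.
Open Scope R_scope.

Record Cplx := mkC { Re : R; Im : R }.
Definition C0 : Cplx := mkC 0 0.
Definition C1 : Cplx := mkC 1 0.
Definition Cadd (z w : Cplx) : Cplx := mkC (Re z + Re w) (Im z + Im w).
Definition Cmul (z w : Cplx) : Cplx :=
  mkC (Re z * Re w - Im z * Im w) (Re z * Im w + Im z * Re w).
Definition Cmod (z : Cplx) : R := sqrt (Re z ^ 2 + Im z ^ 2).

Record CBanachAlgebra := {
  carrier :> Type;
  bzero : carrier;
  bone : carrier;
  badd : carrier -> carrier -> carrier;
  bopp : carrier -> carrier;
  bmul : carrier -> carrier -> carrier;
  bscal : Cplx -> carrier -> carrier;
  bnorm : carrier -> R;
  badd_assoc : forall x y z, badd x (badd y z) = badd (badd x y) z;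
  badd_comm : forall x y, badd x y = badd y x;
  badd_0 : forall x, badd bzero x = x;
  badd_opp : forall x, badd x (bopp x) = bzero;
  bmul_assoc : forall x y z, bmul x (bmul y z) = bmul (bmul x y) z;
  bmul_1l : forall x, bmul bone x = x;
  bmul_1r : forall x, bmul x bone = x;
  bmul_addl : forall x y z, bmul (badd x y) z = badd (bmul x z) (bmul y z);
  bmul_addr : forall x y z, bmul x (badd y z) = badd (bmul x y) (bmul x z);
  bscal_1 : forall x, bscal C1 x = x;
  bscal_mul : forall s t x, bscal (Cmul s t) x = bscal s (bscal t x);
  bscal_addC : forall s t x, bscal (Cadd s t) x = badd (bscal s x) (bscal t x);
  bscal_add : forall s x y, bscal s (badd x y) = badd (bscal s x) (bscal s y);
  bscal_mull : forall s x y, bscal s (bmul x y) = bmul (bscal s x) y;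
  bscal_mulr : forall s x y, bscal s (bmul x y) = bmul x (bscal s y);
  bnorm_ge0 : forall x, 0 <= bnorm x;
  bnorm_eq0 : forall x, bnorm x = 0 -> x = bzero;
  bnorm_triangle : forall x y, bnorm (badd x y) <= bnorm x + bnorm y;
  bnorm_scal : forall s x, bnorm (bscal s x) = Cmod s * bnorm x;
  bnorm_mul : forall x y, bnorm (bmul x y) <= bnorm x * bnorm y;
  bcomplete : forall u : nat -> carrier,
    (forall eps, 0 < eps -> exists N, forall m n, (N <= m)%nat -> (N <= n)%nat ->
        bnorm (badd (u m) (bopp (u n))) < eps) ->
    exists l, forall eps, 0 < eps -> exists N, forall n, (N <= n)%nat ->
        bnorm (badd (u n) (bopp l)) < eps
}.

Arguments bzero {c}. Arguments bone {c}. Arguments badd {c}. Arguments bopp {c}.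
Arguments bmul {c}. Arguments bscal {c}. Arguments bnorm {c}.

Section Defs.
Variable A : CBanachAlgebra.

Definition bsub (x y : A) : A := badd x (bopp y).

Fixpoint bpow (x : A) (n : nat) : A :=
  match n with O => bone | S m => bmul x (bpow x m) end.

Definition bconv (u : nat -> A) (l : A) : Prop :=
  forall eps, 0 < eps -> exists N, forall n, (N <= n)%nat -> bnorm (bsub (u n) l) < eps.

Fixpoint bpartial (f : nat -> A) (n : nat) : A :=
  match n with O => f O | S m => badd (bpartial f m) (f (S m)) end.

Definition bseries (f : nat -> A) (S : A) : Prop := bconv (bpartial f) S.

Definition bcomm (x : A) : A -> Prop := fun y => bmul x y = bmul y x.

Definition nroot (n : nat) (t : R) : R :=
  match Rle_dec t 0 with left _ => 0 | right _ => Rpower t (/ INR n) end.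

Definition qnil (x : A) : Prop :=
  Un_cv (fun n => nroot n (bnorm (bpow x n))) 0.

Definition is_gdrazin (x y : A) : Prop :=
  bcomm x y /\ y = bmul y (bmul x y) /\ qnil (bsub x (bmul (bmul x x) y)).

Definition gdrazin_invertible (x : A) : Prop := exists y, is_gdrazin x y.

(* spectral idempotent x^pi = 1 - x x^d, given the g-Drazin inverse xd *)
Definition spi (x xd : A) : A := bsub bone (bmul x xd).

End Defs.

Arguments bsub {A}. Arguments bpow {A}. Arguments bconv {A}. Arguments bpartial {A}.
Arguments bseries {A}. Arguments bcomm {A}. Arguments qnil {A}.
Arguments is_gdrazin {A}. Arguments gdrazin_invertible {A}. Arguments spi {A}.

From Pilot Require Import Defs.
From Stdlib Require Import Reals Lia Lra List Ncring Ncring_tac.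
Open Scope R_scope.

(* Multiplying the hypothesis [ab = lam a^pi b a b^pi] by [(a^d)^2] on the left, resp. by
   [(b^d)^2] on the right, gives [a^d b = 0] and [a b^d = 0]; hence [a^pi b = b], [a b^pi = a]
   and [ab = lam ba].  The other cross products [x = b^d a] and [x = b a^d] then satisfy
   [lam x = w x q] with [q] quasinilpotent, so [|lam|^n |x| <= |w|^n |q^n| |x|] for all [n],
   which forces [x = 0].  So every series vanishes and [(a+b)^d = a^d + b^d]: the quasinilpotent
   part of [a+b] is the sum of those of [a] and [b], which [lam]-commute, and a sum of
   [lam]-commuting quasinilpotents is quasinilpotent because [(u+v)^n] expands into [2^n] words
   [lam^k v^i u^j] with [i + j = n] (for [|lam| > 1] exchange [u], [v] and use [1/lam]). *)

#[global] Instance cba_ring_ops (A : CBanachAlgebra) :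
  @Ring_ops (carrier A) bzero bone badd bmul bsub bopp (@eq _) := {}.

#[global] Instance cba_ring (A : CBanachAlgebra) : Ring (Ro := cba_ring_ops A).
Proof.
  constructor; try exact eq_equivalence.
  all: cbv [Proper respectful equality eq_notation]; intros; subst; try reflexivity.
  - exact (badd_0 A _).
  - exact (badd_comm A _ _).
  - exact (badd_assoc A _ _ _).
  - exact (bmul_1l A _).
  - exact (bmul_1r A _).
  - exact (bmul_assoc A _ _ _).
  - exact (bmul_addl A _ _ _).
  - exact (bmul_addr A _ _ _).
  - exact (badd_opp A _).
Qed.

Lemma pow2_unbounded (K : R) : exists N, K < 2 ^ N.
Proof.
  destruct (INR_unbounded K) as [N HN]. exists N.
  enough (INR N < 2 ^ N) by lra. clear HN.
  induction N as [|N IH]; [simpl; lra|].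
  rewrite S_INR; simpl. assert (1 <= 2 ^ N) by (apply pow_R1_Rle; lra). lra.
Qed.

Lemma Rpower_pos t e : 0 < Rpower t e.
Proof. apply exp_pos. Qed.

Lemma Rpower_pow_inv (c : R) (n : nat) : 0 < c -> (1 <= n)%nat ->
  Rpower (c ^ n) (/ INR n) = c.
Proof.
  intros Hc Hn. rewrite <- Rpower_pow, Rpower_mult, Rinv_r by (exact Hc || apply not_0_INR; lia).
  apply Rpower_1, Hc.
Qed.

Lemma pow_Rpower_inv (t : R) (n : nat) : 0 < t -> (1 <= n)%nat ->
  Rpower t (/ INR n) ^ n = t.
Proof.
  intros Ht Hn. rewrite <- Rpower_pow, Rpower_mult, Rinv_l by (apply Rpower_pos || apply not_0_INR; lia).
  apply Rpower_1, Ht.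
Qed.

Lemma finite_geometric_bound (f : nat -> R) (e : R) (M : nat) : 0 < e ->
  exists K, 0 < K /\ forall n, (n < M)%nat -> f n <= K * e ^ n.
Proof.
  intros He. induction M as [|M [K [HK HKn]]].
  - exists 1. split; [lra | intros; lia].
  - assert (HeM : 0 < e ^ M) by (apply pow_lt, He).
    set (r := Rabs (f M) / e ^ M).
    assert (Hr : 0 <= r).
    { apply Rmult_le_pos; [apply Rabs_pos | left; apply Rinv_0_lt_compat, HeM]. }
    exists (K + r). split; [lra|].
    intros n Hn. rewrite Rmult_plus_distr_r.
    assert (0 <= r * e ^ n) by (apply Rmult_le_pos; [exact Hr | apply pow_le; lra]).
    destruct (Nat.eq_dec n M) as [->|Hne].
    + unfold r, Rdiv. rewrite Rmult_assoc, Rinv_l by lra.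
      assert (0 <= K * e ^ M) by (apply Rmult_le_pos; lra).
      pose proof (Rle_abs (f M)). lra.
    + assert (f n <= K * e ^ n) by (apply HKn; lia). lra.
Qed.

Definition Cinv (z : Cplx) : Cplx :=
  mkC (Re z / (Re z ^ 2 + Im z ^ 2)) (- Im z / (Re z ^ 2 + Im z ^ 2)).

Lemma Cnorm2_gt0 z : z <> C0 -> 0 < Re z ^ 2 + Im z ^ 2.
Proof.
  intros Hz. destruct z as [x y]; cbn [Re Im].
  destruct (Req_dec x 0) as [->|Hx]; [destruct (Req_dec y 0) as [->|Hy]|]; [now contradict Hz | nra | nra].
Qed.

Lemma Cmod_gt0 z : z <> C0 -> 0 < Cmod z.
Proof. intros Hz. apply sqrt_lt_R0, Cnorm2_gt0, Hz. Qed.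

Lemma Cmod_ge0 c : 0 <= Cmod c.
Proof. apply sqrt_pos. Qed.

Lemma CmulVz z : z <> C0 -> Cmul (Cinv z) z = Defs.C1.
Proof.
  intros Hz. pose proof (Cnorm2_gt0 z Hz). destruct z as [x y]; cbn [Re Im] in *.
  unfold Cmul, Cinv, Defs.C1; cbn [Re Im]. f_equal; field; lra.
Qed.

Lemma Cmod_inv_le1 z : 1 < Cmod z -> Cmod (Cinv z) <= 1.
Proof.
  unfold Cmod, Cinv. destruct z as [x y]; cbn [Re Im]. intros H1.
  assert (Hg : 1 < x ^ 2 + y ^ 2).
  { destruct (Rle_dec (x ^ 2 + y ^ 2) 1) as [Hle|]; [|lra].
    apply sqrt_le_1_alt in Hle. rewrite sqrt_1 in Hle. lra. }
  replace ((x / (x ^ 2 + y ^ 2)) ^ 2 + (- y / (x ^ 2 + y ^ 2)) ^ 2) with (/ (x ^ 2 + y ^ 2))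
    by (field; lra).
  rewrite <- sqrt_1. apply sqrt_le_1_alt.
  rewrite <- Rinv_1. apply Rinv_le_contravar; lra.
Qed.

Section BanachAlgebra.
Variable A : CBanachAlgebra.

Lemma bscal0 (c : Cplx) : bscal c (@bzero A) = bzero.
Proof.
  transitivity (bscal c (bmul (@bzero A) bzero)); [f_equal; non_commutative_ring|].
  rewrite (bscal_mull A). non_commutative_ring.
Qed.

Lemma Cmod0 : Cmod C0 = 0.
Proof. unfold Cmod, C0; cbn [Re Im]. replace (0 ^ 2 + 0 ^ 2) with 0 by ring. apply sqrt_0. Qed.

Lemma bnorm0 : bnorm (@bzero A) = 0.
Proof. rewrite <- (bscal0 C0), (bnorm_scal A), Cmod0. ring. Qed.

Lemma bpow_succ_r (x : A) n : bpow x (S n) = bmul (bpow x n) x.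
Proof.
  induction n as [|n IH]; simpl in *; [non_commutative_ring|].
  transitivity (bmul x (bmul (bpow x n) x)); [f_equal; exact IH | non_commutative_ring].
Qed.

Lemma bnorm_pow_le (x : A) n : bnorm (bpow x (S n)) <= bnorm x ^ S n.
Proof.
  induction n as [|n IH].
  - simpl. rewrite (bmul_1r A). lra.
  - change (bpow x (S (S n))) with (bmul x (bpow x (S n))).
    eapply Rle_trans; [apply (bnorm_mul A)|].
    apply Rmult_le_compat_l; [apply (bnorm_ge0 A) | exact IH].
Qed.

Lemma bnorm_mul3 (p x q : A) : bnorm (bmul (bmul p x) q) <= bnorm p * bnorm x * bnorm q.
Proof.
  eapply Rle_trans; [apply (bnorm_mul A)|].
  apply Rmult_le_compat_r; [apply (bnorm_ge0 A) | apply (bnorm_mul A)].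
Qed.

Lemma qnil_geometric_bound (x : A) : qnil x -> forall e, 0 < e ->
  exists K, 0 < K /\ forall n, bnorm (bpow x n) <= K * e ^ n.
Proof.
  intros Hq e He. destruct (Hq e He) as [N HN].
  assert (Htail : forall n, (N <= n)%nat -> (1 <= n)%nat -> bnorm (bpow x n) <= e ^ n).
  { intros n HNn Hn. specialize (HN n HNn). unfold R_dist, nroot in HN.
    destruct (Rle_dec (bnorm (bpow x n)) 0) as [Hle|Hgt].
    - pose proof (pow_le e n (Rlt_le _ _ He)). lra.
    - apply Rnot_le_lt in Hgt.
      rewrite Rminus_0_r, Rabs_right in HN by (left; apply Rpower_pos).
      rewrite <- (pow_Rpower_inv _ n Hgt Hn).
      apply pow_incr. split; [left; apply Rpower_pos | lra]. }
  destruct (finite_geometric_bound (fun n => bnorm (bpow x n)) e (S N) He) as [K [HK HKn]].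
  exists (K + 1). split; [lra|]. intros n.
  assert (0 < e ^ n) by (apply pow_lt, He).
  assert (0 <= K * e ^ n) by (apply Rmult_le_pos; lra).
  rewrite Rmult_plus_distr_r, Rmult_1_l.
  destruct (Nat.lt_ge_cases n (S N)) as [Hl|Hg].
  - specialize (HKn n Hl). simpl in HKn. lra.
  - specialize (Htail n ltac:(lia) ltac:(lia)). lra.
Qed.

Lemma geometric_bound_qnil (x : A) :
  (forall e, 0 < e -> exists K, 0 < K /\ forall n, bnorm (bpow x n) <= K * e ^ n) -> qnil x.
Proof.
  intros H eps Heps. destruct (H (eps / 4)) as [K [HK HKn]]; [lra|].
  destruct (pow2_unbounded K) as [N HN].
  exists (S N). intros n Hn. unfold R_dist, nroot. rewrite Rminus_0_r.
  destruct (Rle_dec (bnorm (bpow x n)) 0) as [Hle|Hgt].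
  - rewrite Rabs_R0. lra.
  - apply Rnot_le_lt in Hgt. rewrite Rabs_right by (left; apply Rpower_pos).
    (* [K (eps/4)^n <= (eps/2)^n] once [2^n > K] *)
    assert (Hb : bnorm (bpow x n) <= (eps / 2) ^ n).
    { eapply Rle_trans; [apply HKn|].
      replace (eps / 2) with (2 * (eps / 4)) by field.
      rewrite Rpow_mult_distr. apply Rmult_le_compat_r; [apply pow_le; lra|].
      left. eapply Rlt_le_trans; [exact HN|]. apply Rle_pow; [lra | lia]. }
    eapply Rle_lt_trans.
    + apply Rle_Rpower_l; [left; apply Rinv_0_lt_compat, lt_0_INR; lia | split; [exact Hgt | exact Hb]].
    + rewrite Rpower_pow_inv by (lra || lia). lra.
Qed.

Lemma qnil_geometric_domination_eq0 (c B t : R) (v : A) :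
  0 < c -> 0 <= B -> 0 <= t -> qnil v ->
  (forall n, c ^ S n * t <= B ^ S n * bnorm (bpow v (S n)) * t) -> t = 0.
Proof.
  intros Hc HB Ht Hv H.
  set (e := c / (2 * (B + 1))).
  assert (He : 0 < e) by (apply Rdiv_lt_0_compat; lra).
  assert (HBe : B * e <= c / 2).
  { unfold e. apply (Rmult_le_reg_r (2 * (B + 1))); [lra|]. field_simplify; [nra | lra]. }
  destruct (qnil_geometric_bound v Hv e He) as [K [HK HKn]].
  destruct (pow2_unbounded K) as [N HN].
  assert (H2 : 0 < 2 ^ S N) by (apply pow_lt; lra).
  assert (Hcm : 0 < (c / 2) ^ S N) by (apply pow_lt; lra).
  assert (Hdom : (c / 2) ^ S N * (2 ^ S N * t) <= (c / 2) ^ S N * (K * t)).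
  { rewrite <- Rmult_assoc, <- Rpow_mult_distr.
    replace (c / 2 * 2) with c by field.
    replace ((c / 2) ^ S N * (K * t)) with ((c / 2) ^ S N * K * t) by ring.
    eapply Rle_trans; [apply H|]. apply Rmult_le_compat_r; [exact Ht|].
    eapply Rle_trans; [apply Rmult_le_compat_l; [apply pow_le, HB | apply HKn]|].
    replace (B ^ S N * (K * e ^ S N)) with (K * (B * e) ^ S N) by (rewrite Rpow_mult_distr; ring).
    rewrite (Rmult_comm _ K). apply Rmult_le_compat_l; [lra|].
    apply pow_incr. split; [apply Rmult_le_pos; lra | exact HBe]. }
  apply Rmult_le_reg_l in Hdom; [|exact Hcm].
  assert (2 ^ N < 2 ^ S N) by (simpl; pose proof (pow_lt 2 N ltac:(lra)); lra).
  nra.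
Qed.

(* [bscal_iter c n x] is [c^n x], avoiding powers in [Cplx]. *)
Fixpoint bscal_iter (c : Cplx) (n : nat) (x : A) : A :=
  match n with O => x | S m => bscal c (bscal_iter c m x) end.

Lemma bnorm_bscal_iter c n x : bnorm (bscal_iter c n x) = Cmod c ^ n * bnorm x.
Proof. induction n as [|n IH]; simpl; [ring|]. rewrite (bnorm_scal A), IH. ring. Qed.

Lemma bscal_iter_mull c n x y : bmul (bscal_iter c n x) y = bscal_iter c n (bmul x y).
Proof. induction n as [|n IH]; simpl; [reflexivity|]. rewrite <- (bscal_mull A), IH. reflexivity. Qed.

Lemma bscal_iter_mulr c n x y : bmul x (bscal_iter c n y) = bscal_iter c n (bmul x y).
Proof. induction n as [|n IH]; simpl; [reflexivity|]. rewrite <- (bscal_mulr A), IH. reflexivity. Qed.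

Lemma bscal_iter_add c k i x : bscal_iter c k (bscal_iter c i x) = bscal_iter c (k + i) x.
Proof. induction k as [|k IH]; simpl; [reflexivity|]. rewrite IH. reflexivity. Qed.

Lemma bscal_iter_sandwich c (w x v : A) : bscal c x = bmul (bmul w x) v ->
  forall n, bscal_iter c n x = bmul (bmul (bpow w n) x) (bpow v n).
Proof.
  intros H n. induction n as [|n IH]; simpl bscal_iter; [simpl; non_commutative_ring|].
  rewrite IH, (bscal_mull A), (bscal_mulr A), H, (bpow_succ_r w n). cbn [bpow].
  non_commutative_ring.
Qed.

Lemma bnorm_sandwich_iter_le c (w x v : A) : bscal c x = bmul (bmul w x) v ->
  forall n, Cmod c ^ n * bnorm x <= bnorm (bpow w n) * bnorm x * bnorm (bpow v n).
Proof.
  intros H n. rewrite <- bnorm_bscal_iter, (bscal_iter_sandwich c w x v H). apply bnorm_mul3.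
Qed.

Lemma qnil_sandwich_r_eq0 (c : Cplx) (w x v : A) : c <> C0 -> qnil v ->
  bscal c x = bmul (bmul w x) v -> x = bzero.
Proof.
  intros Hc Hv H. apply (bnorm_eq0 A).
  apply (qnil_geometric_domination_eq0 (Cmod c) (bnorm w) _ v (Cmod_gt0 c Hc) (bnorm_ge0 A w)
           (bnorm_ge0 A x) Hv).
  intros n. eapply Rle_trans; [apply (bnorm_sandwich_iter_le c w x v H)|].
  pose proof (bnorm_ge0 A x). pose proof (bnorm_ge0 A (bpow v (S n))).
  pose proof (bnorm_pow_le w n).
  replace (bnorm w ^ S n * bnorm (bpow v (S n)) * bnorm x)
    with (bnorm w ^ S n * bnorm x * bnorm (bpow v (S n))) by ring.
  apply Rmult_le_compat_r; [|apply Rmult_le_compat_r]; assumption.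
Qed.

Lemma qnil_sandwich_l_eq0 (c : Cplx) (w x v : A) : c <> C0 -> qnil w ->
  bscal c x = bmul (bmul w x) v -> x = bzero.
Proof.
  intros Hc Hw H. apply (bnorm_eq0 A).
  apply (qnil_geometric_domination_eq0 (Cmod c) (bnorm v) _ w (Cmod_gt0 c Hc) (bnorm_ge0 A v)
           (bnorm_ge0 A x) Hw).
  intros n. eapply Rle_trans; [apply (bnorm_sandwich_iter_le c w x v H)|].
  pose proof (bnorm_ge0 A x). pose proof (bnorm_ge0 A (bpow w (S n))).
  pose proof (bnorm_pow_le v n).
  replace (bnorm v ^ S n * bnorm (bpow w (S n)) * bnorm x)
    with (bnorm (bpow w (S n)) * bnorm x * bnorm v ^ S n) by ring.
  apply Rmult_le_compat_l; [apply Rmult_le_pos|]; assumption.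
Qed.

Lemma qcommute_pow (u v : A) mu : bmul u v = bscal mu (bmul v u) ->
  forall i, bmul u (bpow v i) = bscal_iter mu i (bmul (bpow v i) u).
Proof.
  intros H i. induction i as [|i IH]; cbn [bpow bscal_iter]; [non_commutative_ring|].
  transitivity (bmul (bmul u v) (bpow v i)); [non_commutative_ring|].
  rewrite H, <- (bscal_mull A). f_equal.
  transitivity (bmul v (bmul u (bpow v i))); [non_commutative_ring|].
  rewrite IH, bscal_iter_mulr. f_equal. non_commutative_ring.
Qed.

Fixpoint bsum_list {T : Type} (f : T -> A) (l : list T) : A :=
  match l with nil => bzero | t :: r => badd (f t) (bsum_list f r) end.

Lemma bsum_list_app {T} (f : T -> A) l1 l2 :
  bsum_list f (l1 ++ l2) = badd (bsum_list f l1) (bsum_list f l2).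
Proof. induction l1 as [|t l1 IH]; simpl; [|rewrite IH]; non_commutative_ring. Qed.

Lemma bsum_list_mull {T} (f : T -> A) (g : T -> T) (x : A) l :
  (forall t, bmul x (f t) = f (g t)) -> bmul x (bsum_list f l) = bsum_list f (map g l).
Proof.
  intros H. induction l as [|t l IH]; simpl; [non_commutative_ring|].
  rewrite (bmul_addr A), H, IH. reflexivity.
Qed.

Lemma bnorm_bsum_list_le {T} (f : T -> A) (M : R) l :
  (forall t, In t l -> bnorm (f t) <= M) -> bnorm (bsum_list f l) <= INR (length l) * M.
Proof.
  intros H. induction l as [|t l IH]; cbn [bsum_list length].
  - rewrite bnorm0. simpl. lra.
  - eapply Rle_trans; [apply (bnorm_triangle A)|]. rewrite S_INR.
    assert (bnorm (f t) <= M) by (apply H; left; reflexivity).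
    assert (bnorm (bsum_list f l) <= INR (length l) * M) by (apply IH; intros; apply H; right; assumption).
    lra.
Qed.

(* [(k, i, j)] stands for the word [mu^k v^i u^j]. *)
Definition qcommute_word (mu : Cplx) (u v : A) (t : nat * nat * nat) : A :=
  let '(k, i, j) := t in bscal_iter mu k (bmul (bpow v i) (bpow u j)).

Lemma bpow_add_qcommute (u v : A) mu : bmul u v = bscal mu (bmul v u) ->
  forall n, exists l, length l = (2 ^ n)%nat /\
    (forall t, In t l -> (snd (fst t) + snd t = n)%nat) /\
    bpow (badd u v) n = bsum_list (qcommute_word mu u v) l.
Proof.
  intros Huv n. induction n as [|n [l [Hlen [Hin Heq]]]].
  - exists ((0, 0, 0)%nat :: nil). split; [reflexivity|]. split.
    + intros t [<-|[]]. reflexivity.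
    + simpl. non_commutative_ring.
  - exists (map (fun t => let '(k, i, j) := t in (k + i, i, S j)%nat) l ++
            map (fun t => let '(k, i, j) := t in (k, S i, j)) l).
    split; [|split].
    + rewrite length_app, !length_map, Hlen. simpl. lia.
    + intros t Ht. apply in_app_or in Ht as [Ht|Ht];
        apply in_map_iff in Ht as [[[k i] j] [<- Ht']]; specialize (Hin _ Ht'); simpl in *; lia.
    + cbn [bpow]. rewrite Heq, (bmul_addl A), bsum_list_app. f_equal.
      * apply bsum_list_mull. intros [[k i] j]. simpl qcommute_word.
        rewrite bscal_iter_mulr, <- bscal_iter_add. f_equal.
        transitivity (bmul (bmul u (bpow v i)) (bpow u j)); [non_commutative_ring|].
        rewrite (qcommute_pow u v mu Huv i), bscal_iter_mull. f_equal. cbn [bpow]. non_commutative_ring.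
      * apply bsum_list_mull. intros [[k i] j]. simpl qcommute_word.
        rewrite bscal_iter_mulr. f_equal. cbn [bpow]. non_commutative_ring.
Qed.

Lemma qnil_add_qcommute_le1 (u v : A) mu : Cmod mu <= 1 ->
  bmul u v = bscal mu (bmul v u) -> qnil u -> qnil v -> qnil (badd u v).
Proof.
  intros Hmu Huv Hu Hv. apply geometric_bound_qnil. intros e He.
  destruct (qnil_geometric_bound u Hu (e / 2)) as [K1 [HK1 HK1n]]; [lra|].
  destruct (qnil_geometric_bound v Hv (e / 2)) as [K2 [HK2 HK2n]]; [lra|].
  exists (K1 * K2). split; [apply Rmult_lt_0_compat; lra|]. intros n.
  destruct (bpow_add_qcommute u v mu Huv n) as [l [Hlen [Hin ->]]].
  eapply Rle_trans; [apply (bnorm_bsum_list_le _ (K1 * K2 * (e / 2) ^ n))|].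
  - intros [[k i] j] Ht. specialize (Hin _ Ht). simpl in Hin. simpl qcommute_word.
    rewrite bnorm_bscal_iter.
    assert (Hk : Cmod mu ^ k <= 1).
    { rewrite <- (pow1 k). apply pow_incr. split; [apply Cmod_ge0 | exact Hmu]. }
    assert (Hm : bnorm (bmul (bpow v i) (bpow u j)) <= K1 * K2 * (e / 2) ^ n).
    { eapply Rle_trans; [apply (bnorm_mul A)|].
      subst n. rewrite pow_add.
      replace (K1 * K2 * ((e / 2) ^ i * (e / 2) ^ j)) with (K2 * (e / 2) ^ i * (K1 * (e / 2) ^ j)) by ring.
      apply Rmult_le_compat; [apply (bnorm_ge0 A) | apply (bnorm_ge0 A) | apply HK2n | apply HK1n]. }
    pose proof (pow_le (Cmod mu) k (Cmod_ge0 mu)).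
    pose proof (bnorm_ge0 A (bmul (bpow v i) (bpow u j))).
    nra.
  - rewrite Hlen, pow_INR. apply Req_le.
    replace (e ^ n) with ((INR 2 * (e / 2)) ^ n) by (f_equal; simpl; field).
    rewrite Rpow_mult_distr. ring.
Qed.

Lemma qnil_add_qcommute (u v : A) mu : mu <> C0 ->
  bmul u v = bscal mu (bmul v u) -> qnil u -> qnil v -> qnil (badd u v).
Proof.
  intros Hmu Huv Hu Hv. destruct (Rle_dec (Cmod mu) 1) as [Hle|Hgt].
  - exact (qnil_add_qcommute_le1 u v mu Hle Huv Hu Hv).
  - rewrite (badd_comm A).
    apply (qnil_add_qcommute_le1 v u (Cinv mu)); [apply Cmod_inv_le1; lra | | exact Hv | exact Hu].
    rewrite Huv, <- (bscal_mul A), (CmulVz mu Hmu), (bscal_1 A). reflexivity.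
Qed.

Lemma bseries_zero (f : nat -> A) : (forall n, f n = bzero) -> bseries f bzero.
Proof.
  intros H eps Heps. exists O. intros n _.
  assert (Hp : bpartial f n = bzero).
  { induction n as [|n IH]; simpl; [apply H|]. rewrite IH, H. non_commutative_ring. }
  rewrite Hp. replace (bsub (@bzero A) bzero) with (@bzero A) by non_commutative_ring.
  rewrite bnorm0. exact Heps.
Qed.

Lemma bpow_succ_mul_eq0 (y x : A) n : bmul y x = bzero -> bmul (bpow y (S n)) x = bzero.
Proof.
  intros H. rewrite bpow_succ_r.
  transitivity (bmul (bpow y n) (bmul y x)); [non_commutative_ring|].
  rewrite H. non_commutative_ring.
Qed.

Lemma mul_bpow_succ_eq0 (x y : A) n : bmul x y = bzero -> bmul x (bpow y (S n)) = bzero.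
Proof.
  intros H. cbn [bpow].
  transitivity (bmul (bmul x y) (bpow y n)); [non_commutative_ring|].
  rewrite H. non_commutative_ring.
Qed.

Definition qnil_part (a ad : A) : A := bsub a (bmul (bmul a a) ad).

Section GDrazinInverse.
Variables a ad : A.
Hypothesis Had : is_gdrazin a ad.

Lemma gdrazin_comm : bmul a ad = bmul ad a.
Proof. apply Had. Qed.

Lemma gdrazin_sq_l : ad = bmul (bmul ad ad) a.
Proof.
  destruct Had as [Hc [Hi _]]. rewrite Hi at 1. unfold bcomm in Hc. rewrite Hc.
  non_commutative_ring.
Qed.

Lemma gdrazin_sq_r : ad = bmul a (bmul ad ad).
Proof.
  destruct Had as [Hc [Hi _]]. rewrite Hi at 1.
  transitivity (bmul (bmul ad a) ad); [non_commutative_ring|].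
  unfold bcomm in Hc. rewrite <- Hc. non_commutative_ring.
Qed.

Lemma gdrazin_mul_spi : bmul ad (spi a ad) = bzero.
Proof.
  destruct Had as [_ [Hi _]]. unfold spi.
  transitivity (bsub ad (bmul ad (bmul a ad))); [non_commutative_ring|].
  rewrite <- Hi. non_commutative_ring.
Qed.

Lemma spi_mul_gdrazin : bmul (spi a ad) ad = bzero.
Proof.
  unfold spi. transitivity (bsub ad (bmul a (bmul ad ad))); [non_commutative_ring|].
  rewrite <- gdrazin_sq_r. non_commutative_ring.
Qed.

Lemma qnil_part_mul (x : A) : bmul ad x = bzero -> bmul (qnil_part a ad) x = bmul a x.
Proof.
  intros H. unfold qnil_part.
  transitivity (bsub (bmul a x) (bmul (bmul a a) (bmul ad x))); [non_commutative_ring|].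
  rewrite H. non_commutative_ring.
Qed.

Lemma mul_qnil_part (x : A) : bmul x ad = bzero -> bmul x (qnil_part a ad) = bmul x a.
Proof.
  intros H. unfold qnil_part.
  transitivity (bsub (bmul x a) (bmul x (bmul a (bmul a ad)))); [non_commutative_ring|].
  rewrite gdrazin_comm.
  transitivity (bsub (bmul x a) (bmul x (bmul (bmul a ad) a))); [non_commutative_ring|].
  rewrite gdrazin_comm.
  transitivity (bsub (bmul x a) (bmul (bmul (bmul x ad) a) a)); [non_commutative_ring|].
  rewrite H. non_commutative_ring.
Qed.

Lemma qnil_qnil_part : qnil (qnil_part a ad).
Proof. apply Had. Qed.

End GDrazinInverse.

Section OrthogonalSum.
Variables a ad b bd : A.
Hypotheses (Had : is_gdrazin a ad) (Hbd : is_gdrazin b bd).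
Hypotheses (Hadb : bmul ad b = bzero) (Habd : bmul a bd = bzero)
           (Hbda : bmul bd a = bzero) (Hbad : bmul b ad = bzero).

Lemma qnil_part_mul_orth : bmul (qnil_part a ad) (qnil_part b bd) = bmul a b.
Proof.
  rewrite (qnil_part_mul a ad), (mul_qnil_part b bd Hbd _ Habd); [reflexivity|].
  unfold qnil_part.
  transitivity (bsub (bmul ad b) (bmul (bmul ad b) (bmul b bd))); [non_commutative_ring|].
  rewrite Hadb. non_commutative_ring.
Qed.

Lemma spi_mul_gdrazin_orth : bmul (spi b bd) ad = ad.
Proof.
  unfold spi. rewrite (gdrazin_sq_l b bd Hbd).
  transitivity (bsub ad (bmul (bmul b (bmul bd bd)) (bmul b ad))); [non_commutative_ring|].
  rewrite Hbad. non_commutative_ring.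
Qed.

Lemma gdrazin_mul_spi_orth : bmul bd (spi a ad) = bd.
Proof.
  unfold spi. transitivity (bsub bd (bmul (bmul bd a) ad)); [non_commutative_ring|].
  rewrite Hbda. non_commutative_ring.
Qed.

Lemma is_gdrazin_add_orth :
  qnil (badd (qnil_part a ad) (qnil_part b bd)) -> is_gdrazin (badd a b) (badd ad bd).
Proof.
  intros Hq. pose proof (gdrazin_comm a ad Had) as Ha. pose proof (gdrazin_comm b bd Hbd) as Hb.
  destruct Had as [_ [Ha2 _]]. destruct Hbd as [_ [Hb2 _]].
  split; [|split].
  - unfold bcomm.
    transitivity (badd (badd (bmul a ad) (bmul a bd)) (badd (bmul b ad) (bmul b bd)));
      [non_commutative_ring|].
    rewrite Habd, Hbad, Ha, Hb.
    transitivity (badd (badd (bmul ad a) (bmul ad b)) (badd (bmul bd a) (bmul bd b)));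
      [|non_commutative_ring].
    rewrite Hadb, Hbda. non_commutative_ring.
  - transitivity
      (badd (badd (badd (bmul ad (bmul a ad)) (bmul ad (bmul a bd)))
                  (badd (bmul (bmul ad b) ad) (bmul (bmul ad b) bd)))
            (badd (badd (bmul (bmul bd a) ad) (bmul (bmul bd a) bd))
                  (badd (bmul bd (bmul b ad)) (bmul bd (bmul b bd)))));
      [|non_commutative_ring].
    rewrite Hadb, Habd, Hbad, Hbda, <- Ha2, <- Hb2. non_commutative_ring.
  - replace (bsub (badd a b) (bmul (bmul (badd a b) (badd a b)) (badd ad bd)))
      with (badd (qnil_part a ad) (qnil_part b bd)); [exact Hq|].
    assert (Habbd : bmul a (bmul b bd) = bzero).
    { rewrite Hb. transitivity (bmul (bmul a bd) b); [non_commutative_ring|].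
      rewrite Habd. non_commutative_ring. }
    assert (Hbaad : bmul b (bmul a ad) = bzero).
    { rewrite Ha. transitivity (bmul (bmul b ad) a); [non_commutative_ring|].
      rewrite Hbad. non_commutative_ring. }
    unfold qnil_part.
    transitivity
      (bsub (badd (bsub a (bmul (bmul a a) ad)) (bsub b (bmul (bmul b b) bd)))
            (badd (badd (bmul a (bmul a bd)) (bmul a (bmul b ad)))
                  (badd (badd (bmul a (bmul b bd)) (bmul b (bmul a ad)))
                        (badd (bmul b (bmul a bd)) (bmul b (bmul b ad))))));
      [|non_commutative_ring].
    rewrite Habd, Hbad, Habbd, Hbaad. non_commutative_ring.
Qed.

End OrthogonalSum.

Section QCommutingHypothesis.
Variables (lam : Cplx) (a b ad bd : A).
Hypotheses (Hlam : lam <> C0) (Had : is_gdrazin a ad) (Hbd : is_gdrazin b bd).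
Hypothesis Hab : bmul a b = bscal lam (bmul (bmul (bmul (spi a ad) b) a) (spi b bd)).

Lemma ad_mul_b_eq0 : bmul ad b = bzero.
Proof.
  rewrite (gdrazin_sq_l a ad Had).
  transitivity (bmul (bmul ad ad) (bmul a b)); [non_commutative_ring|].
  rewrite Hab, <- (bscal_mulr A).
  transitivity (bscal lam (bmul ad (bmul (bmul ad (spi a ad)) (bmul (bmul b a) (spi b bd)))));
    [f_equal; non_commutative_ring|].
  rewrite (gdrazin_mul_spi a ad Had).
  transitivity (bscal lam (@bzero A)); [f_equal; non_commutative_ring | apply bscal0].
Qed.

Lemma a_mul_bd_eq0 : bmul a bd = bzero.
Proof.
  rewrite (gdrazin_sq_r b bd Hbd).
  transitivity (bmul (bmul a b) (bmul bd bd)); [non_commutative_ring|].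
  rewrite Hab, <- (bscal_mull A).
  transitivity (bscal lam (bmul (bmul (bmul (spi a ad) b) a) (bmul (bmul (spi b bd) bd) bd)));
    [f_equal; non_commutative_ring|].
  rewrite (spi_mul_gdrazin b bd Hbd).
  transitivity (bscal lam (@bzero A)); [f_equal; non_commutative_ring | apply bscal0].
Qed.

Lemma ab_qcommute : bmul a b = bscal lam (bmul b a).
Proof.
  assert (Hb : bmul (spi a ad) b = b).
  { unfold spi. transitivity (bsub b (bmul a (bmul ad b))); [non_commutative_ring|].
    rewrite ad_mul_b_eq0. non_commutative_ring. }
  assert (Ha : bmul a (spi b bd) = a).
  { unfold spi. rewrite (gdrazin_comm b bd Hbd).
    transitivity (bsub a (bmul (bmul a bd) b)); [non_commutative_ring|].
    rewrite a_mul_bd_eq0. non_commutative_ring. }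
  rewrite Hab. f_equal.
  transitivity (bmul (bmul (spi a ad) b) (bmul a (spi b bd))); [non_commutative_ring|].
  rewrite Ha, Hb. reflexivity.
Qed.

(* [lam (bd a) = bd (bd a) (b - b^2 bd)] with [b - b^2 bd] quasinilpotent. *)
Lemma bd_mul_a_eq0 : bmul bd a = bzero.
Proof.
  apply (qnil_sandwich_r_eq0 lam bd (bmul bd a) (qnil_part b bd) Hlam (qnil_qnil_part b bd Hbd)).
  transitivity (bmul (bmul bd bd) (bscal lam (bmul b a))).
  { rewrite <- (bscal_mulr A), (gdrazin_sq_l b bd Hbd) at 1. f_equal. non_commutative_ring. }
  rewrite <- ab_qcommute, <- (mul_qnil_part b bd Hbd _ a_mul_bd_eq0).
  non_commutative_ring.
Qed.

(* [lam (b ad) = (a - a^2 ad) (b ad) ad] with [a - a^2 ad] quasinilpotent. *)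
Lemma b_mul_ad_eq0 : bmul b ad = bzero.
Proof.
  apply (qnil_sandwich_l_eq0 lam (qnil_part a ad) (bmul b ad) ad Hlam (qnil_qnil_part a ad Had)).
  transitivity (bmul (bscal lam (bmul b a)) (bmul ad ad)).
  { rewrite <- (bscal_mull A), (gdrazin_sq_r a ad Had) at 1. f_equal. non_commutative_ring. }
  rewrite <- ab_qcommute, <- (qnil_part_mul a ad _ ad_mul_b_eq0).
  non_commutative_ring.
Qed.

End QCommutingHypothesis.

End BanachAlgebra.

Arguments qnil_part {A}.

Theorem theorem2p4 (A : CBanachAlgebra) (lam : Cplx) (a b ad bd : A) :
  lam <> C0 ->
  is_gdrazin a ad ->
  is_gdrazin b bd ->
  bmul a b = bscal lam (bmul (bmul (bmul (spi a ad) b) a) (spi b bd)) ->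
  exists (S1 S2 S3 S4 : A) (T : nat -> A),
    bseries (fun n => bmul (bmul (bmul (bpow bd (n + 2)) a) (bpow (badd a b) n)) (spi a ad)) S1 /\
    bseries (fun n => bmul (bmul (bpow (badd a b) n) b) (bpow ad (n + 2))) S2 /\
    (forall n, bseries (fun k => bmul (bmul (bmul (bmul (bpow bd (k + 1)) a)
                                   (bpow (badd a b) (n + k))) b) (bpow ad (n + 2))) (T n)) /\
    bseries T S3 /\
    bseries (fun n => bmul (bmul (bmul (bmul (bpow bd (n + 2)) a) (bpow (badd a b) n)) b) ad) S4 /\
    is_gdrazin (badd a b)
      (bsub (bsub (badd (badd (badd (bmul (spi b bd) ad) (bmul bd (spi a ad))) S1)
                        (bmul (spi b bd) S2))
                  S3)
            S4).
Proof.
  intros Hlam Had Hbd Hab.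
  pose proof (ad_mul_b_eq0 A lam a b ad bd Had Hab) as Hadb.
  pose proof (a_mul_bd_eq0 A lam a b ad bd Hbd Hab) as Habd.
  pose proof (bd_mul_a_eq0 A lam a b ad bd Hlam Had Hbd Hab) as Hbda.
  pose proof (b_mul_ad_eq0 A lam a b ad bd Hlam Had Hbd Hab) as Hbad.
  pose proof (fun m => bpow_succ_mul_eq0 A bd a m Hbda) as Hbdn.
  pose proof (fun m => mul_bpow_succ_eq0 A b ad m Hbad) as Hadn.
  exists bzero, bzero, bzero, bzero, (fun _ => bzero).
  split; [|split; [|split; [|split; [|split]]]];
    try (intros m); try (apply bseries_zero; intros n).
  all: try (rewrite ?Nat.add_1_r, ?Nat.add_succ_r, ?Hbdn; non_commutative_ring).
  - rewrite Nat.add_succ_r, <- (bmul_assoc A), Hadn. non_commutative_ring.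
  - rewrite (spi_mul_gdrazin_orth A ad b bd Hbd Hbad), (gdrazin_mul_spi_orth A a ad bd Hbda).
    match goal with |- is_gdrazin _ ?y => replace y with (badd ad bd) by non_commutative_ring end.
    apply (is_gdrazin_add_orth A a ad b bd Had Hbd Hadb Habd Hbda Hbad).
    apply (qnil_add_qcommute A _ _ lam Hlam); try apply qnil_qnil_part; try assumption.
    rewrite (qnil_part_mul_orth A a ad b bd Hbd Hadb Habd),
      (qnil_part_mul_orth A b bd a ad Had Hbda Hbad).
    exact (ab_qcommute A lam a b ad bd Had Hbd Hab).
Qed.
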